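(* In a two-player perfect-information game of depth $D$, let $\{\tilde U_s\}$ be learned EPFs with targets $\tilde U'_s$, and let $\tilde Q_s$ be the induced leader payoff functions, as in the context. Suppose $L_\infty(\tilde U_s,\tilde U'_s)\le\epsilon$ for all $s\in\mathcal S$. Then $|\tilde Q_s(\mu_2)-\tilde U_s(\mu_2)|\le\epsilon D$ for all $s\in\mathcal S$ and all $\mu_2\in[\underline V(s),\overline V(s)]$.
   Context: A two-player perfect-information game is a finite rooted tree with states $\mathcal S$. Its leaves $\mathcal L$ carry payoffs $r_1(\ell),r_2(\ell)$ for the leader $\mathsf P_1$ and the follower $\mathsf P_2$. Non-leaf states are partitioned into leader states $\mathcal S_1$ and follower states $\mathcal S_2$, and $\mathcal C(s)$ denotes the children of $s$. The depth $D$ is the maximum number of edges on a root-to-leaf path. Bounds, defined by backward induction: - $\underline V(\ell)=\overline V(\ell)=r_2(\ell)$ for leaves; - $\underline V(s)=\min_{s'}\underline V(s')$ for $s\in\mathcal S_1$; - $\underline V(s)=\max_{s'}\underline V(s')$ for $s\in\mathcal S_2$; - $\overline V(s)=\max_{s'}\overline V(s')$ for every non-leaf $s$. For $s\in\mathcal S_2$ and $s'\in\mathcal C(s)$, let $\tau(s')=\max_{s^!\in\mathcal C(s),s^!\ne s'}\underline V(s^!)$. Let $\beta(s')=\tau(s')$ if the parent of $s'$ is in $\mathcal S_2$, and $-\infty$ if it is in $\mathcal S_1$. Operators, for $g:\mathbb R\to\mathbb R\cup\{-\infty\}$: - $\bigwedge_i g_i$ is the pointwise infimum of all concave $h\ge\max_i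 g_i$; - $[g\triangleright t](\mu)=g(\mu)$ for $\mu\ge t$ and $-\infty$ otherwise. Learned EPFs: for a leaf, $\tilde U_\ell(\mu)=r_1(\ell)$ if $\mu=r_2(\ell)$ and $-\infty$ otherwise. For non-leaf $s$, $\tilde U_s$ is the piecewise linear interpolation of finitely many points with $x$-coordinates in $[\underline V(s),\overline V(s)]$ including both endpoints. It is real-valued there and $-\infty$ outside. Targets: $\tilde U'_s=\bigwedge_{s'\in\mathcal C(s)}(\tilde U_{s'}\triangleright\beta(s'))$ for non-leaf $s$, and $\tilde U'_\ell=\tilde U_\ell$. The loss is $L_\infty(f,g)=\sup_\mu|f(\mu)-g(\mu)|$, with $|(-\infty)-(-\infty)|=0$. Induced payoff $\tilde Q_s:[\underline V(s),\overline V(s)]\to\mathbb R$: for leaves, $\tilde Q_\ell(r_2(\ell))=r_1(\ell)$. For non-leaf $s$ and promise $\mu_2$, let $(\tilde s',\tilde s'',\tilde t,\tilde\mu',\tilde\mu'')$ be the chosen maximizer, over $s',s''\in\mathcal C(s)$, $t\in[0,1]$, $\mu',\mu''$ with $t\mu'+(1-t)\mu''=\mu_2$, of $t[\tilde U_{s'}\triangleright\beta(s')](\mu')+(1-t)[\tilde U_{s''}\triangleright\beta(s'')](\mu'')$. Then $$\tilde Q_s(\mu_2)=\tilde t\,\tilde Q_{\tilde s'}(\tilde\mu')+(1-\tilde t)\,\tilde Q_{\tilde s''}(\tilde\mu'').$$ Thus $\tilde Q_s(\mu_2)$ is the leader's expected payoff when play starts at $s$ with promise $\mu_2$ to the follower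 and proceeds by this one-step-lookahead rule (moving to $\tilde s'$ with probability $\tilde t$ and promise $\tilde\mu'$, and to $\tilde s''$ with probability $1-\tilde t$ and promise $\tilde\mu''$). *)

From HB Require Import structures.
From mathcomp Require Import all_boot all_order all_algebra.
From mathcomp Require Import boolp classical_sets reals constructive_ereal ereal.
Set Implicit Arguments.
Unset Strict Implicit.
Unset Printing Implicit Defensive.
Import Order.TTheory GRing.Theory Num.Theory.
Local Open Scope ring_scope.

(* Game trees.  A state of the game is identified by its address: the     *)
(* sequence of child indices on the path from the root.                   *)
(* [Node true cs]  : leader state (S_1) with children cs                  *)
(* [Node false cs] : follower state (S_2) with children cs                *)
(* [Leaf r1 r2]    : leaf with payoffs r1 (leader) and r2 (follower)      *)
Inductive tree (R : Type) :=
| Leaf of R & R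
| Node of bool & seq (tree R).

Arguments Leaf {R}.
Arguments Node {R}.

Section Game.
Variable R : realType.

Fixpoint wf_tree (t : tree R) : bool :=
  match t with
  | Leaf _ _ => true
  | Node _ cs => (0 < size cs)%N && all wf_tree cs
  end.

Fixpoint subtree (t : tree R) (p : seq nat) : option (tree R) :=
  match p with
  | [::] => Some t
  | i :: p' =>
      match t with
      | Leaf _ _ => None
      | Node _ cs => if (i < size cs)%N then subtree (nth t cs i) p' else None
      end
  end.

Fixpoint depth (t : tree R) : nat :=
  match t with
  | Leaf _ _ => 0%N
  | Node _ cs => (foldr maxn 0%N (map depth cs)).+1
  end.

Definition minl (s : seq R) : R := foldr Num.min (head 0 s) s.
Definition maxl (s : seq R) : R := foldr Num.max (head 0 s) s.

Fixpoint Vlo (t : tree R) : R :=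
  match t with
  | Leaf _ r2 => r2
  | Node leader cs => if leader then minl (map Vlo cs) else maxl (map Vlo cs)
  end.

Fixpoint Vhi (t : tree R) : R :=
  match t with
  | Leaf _ r2 => r2
  | Node _ cs => maxl (map Vhi cs)
  end.

Local Open Scope ereal_scope.

Definition beta (leader : bool) (cs : seq (tree R)) (i : nat) : \bar R :=
  if leader then -oo
  else \big[maxe/-oo]_(j < size cs | j != i :> nat)
         (Vlo (nth (Leaf 0%R 0%R) cs j))%:E.

Definition trunc (g : R -> \bar R) (t : \bar R) : R -> \bar R :=
  fun mu => if t <= mu%:E then g mu else -oo.

Definition concave_e (h : R -> \bar R) : Prop :=
  forall (x y t : R), (0 <= t <= 1)%R ->
    t%:E * h x + (1 - t)%:E * h y <= h (t * x + (1 - t) * y)%R.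

Definition meet_op (gs : seq (R -> \bar R)) : R -> \bar R :=
  fun mu => ereal_inf [set h mu | h in
    [set h : R -> \bar R | [/\ concave_e h,
                               (forall x, h x < +oo) &
                               (forall x, \big[maxe/-oo]_(g <- gs) g x <= h x)]]].

(* L_infinity loss, with |(-oo) - (-oo)| = 0 *)
Definition ediff (a b : \bar R) : \bar R :=
  if (a == -oo) && (b == -oo) then 0 else `|a - b|.

Definition Linf (f g : R -> \bar R) : \bar R :=
  ereal_sup [set ediff (f mu) (g mu) | mu in [set: R]].

Definition leaf_epf (r1 r2 : R) : R -> \bar R :=
  fun mu => if mu == r2 then r1%:E else -oo.

Definition pl_interp (lo hi : R) (f : R -> \bar R) : Prop :=
  exists xs ys : seq R,
    [/\ size xs = size ys, (0 < size xs)%N, sorted <%R xs,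
        xs`_0 = lo & xs`_(size xs).-1 = hi] /\
    [/\ (forall mu, ~ (lo <= mu <= hi)%R -> f mu = -oo),
        (forall k, (k < size xs)%N -> f xs`_k = (ys`_k)%:E) &
        (forall k mu, (k.+1 < size xs)%N -> (xs`_k <= mu <= xs`_k.+1)%R ->
           f mu = (ys`_k + (ys`_k.+1 - ys`_k) * (mu - xs`_k)
                                 / (xs`_k.+1 - xs`_k))%:E)].

(* learned EPFs: U p is the EPF of the state at address p *)
Definition learned_epfs (g : tree R) (U : seq nat -> R -> \bar R) : Prop :=
  (forall p r1 r2, subtree g p = Some (Leaf r1 r2) -> U p = leaf_epf r1 r2) /\
  (forall p leader cs, subtree g p = Some (Node leader cs) ->
     pl_interp (Vlo (Node leader cs)) (Vhi (Node leader cs)) (U p)).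

Definition target (U : seq nat -> R -> \bar R) (p : seq nat) (s : tree R)
  : R -> \bar R :=
  match s with
  | Leaf _ _ => U p
  | Node leader cs =>
      meet_op [seq trunc (U (rcons p i)) (beta leader cs i)
              | i <- iota 0 (size cs)]
  end.

Definition lookahead_obj (U : seq nat -> R -> \bar R) (p : seq nat)
  (leader : bool) (cs : seq (tree R)) (i j : nat) (t mu' mu'' : R) : \bar R :=
  t%:E * trunc (U (rcons p i)) (beta leader cs i) mu'
  + (1 - t)%:E * trunc (U (rcons p j)) (beta leader cs j) mu''.

Definition lookahead_feasible (cs : seq (tree R)) (mu2 : R)
  (i j : nat) (t mu' mu'' : R) : Prop :=
  [/\ (i < size cs)%N, (j < size cs)%N, (0 <= t <= 1)%R &
      (t * mu' + (1 - t) * mu'' = mu2)%R].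

(* Q is an induced payoff function (for some choice of maximizers):
   Q p mu2 is the leader's payoff from the state at address p with
   promise mu2. *)
Definition induced_payoff (g : tree R) (U : seq nat -> R -> \bar R)
  (Q : seq nat -> R -> R) : Prop :=
  (forall p r1 r2, subtree g p = Some (Leaf r1 r2) -> Q p r2 = r1) /\
  (forall p leader cs mu2, subtree g p = Some (Node leader cs) ->
     (Vlo (Node leader cs) <= mu2 <= Vhi (Node leader cs))%R ->
     exists i j t mu' mu'',
       [/\ lookahead_feasible cs mu2 i j t mu' mu'',
           (forall i' j' t' nu' nu'', lookahead_feasible cs mu2 i' j' t' nu' nu'' ->
              lookahead_obj U p leader cs i' j' t' nu' nu''
              <= lookahead_obj U p leader cs i j t mu' mu'') &
           Q p mu2 = (t * Q (rcons p i) mu' + (1 - t) * Q (rcons p j) mu'')%R]).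

End Game.

From HB Require Import structures.
From mathcomp Require Import all_boot all_order all_algebra.
From mathcomp Require Import boolp classical_sets reals constructive_ereal ereal.
From mathcomp Require Import ring lra.
Import Order.TTheory GRing.Theory Num.Theory.
Set Implicit Arguments.
Unset Strict Implicit.
Unset Printing Implicit Defensive.
Local Open Scope ring_scope.

(* In one dimension the concave envelope
   of finitely many functions is attained at [mu2] by a mixture of two of them
   (a supporting line, or a cut-down majorant when all values lie on one side),
   so the target EPF at [mu2] is exactly the value of the one-step-lookahead
   maximizer that defines [Q].  Hence [Q - U] at [mu2] is [target - U], at most
   [eps], plus a convex combination of child errors [Q - U], each at most [eps]
   times the depth below the state. *)

Section FiniteOn.
Variable R : realType.
Local Open Scope ereal_scope.

Lemma sorted_interval_cover (xs : seq R) mu : sorted <%R xs -> (0 < size xs)%N ->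
  (xs`_0 <= mu <= xs`_(size xs).-1)%R ->
  (exists2 k, (k < size xs)%N & mu = xs`_k) \/
  (exists2 k, (k.+1 < size xs)%N & (xs`_k <= mu <= xs`_k.+1)%R).
Proof.
elim: xs => [|a [|b xs] IH] //= xs_sorted _ mu_in.
  by left; exists 0%N => //; apply/eqP; rewrite eq_le andbC.
case/andP: mu_in => a_le_mu mu_le_last.
have [mu_le_b|b_lt_mu] := leP mu b.
  by right; exists 0%N; rewrite /= ?a_le_mu.
case/andP: xs_sorted => _ /IH/(_ isT); rewrite /= (ltW b_lt_mu) mu_le_last => /(_ isT).
by case=> -[] k Hk Hmu; [left | right]; exists k.+1.
Qed.

Definition finite_on (lo hi : R) (f : R -> \bar R) : Prop :=
  forall mu, if (lo <= mu <= hi)%R then f mu \is a fin_num else f mu == -oo.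

Lemma finite_on_lty lo hi f mu : finite_on lo hi f -> f mu < +oo.
Proof.
by move/(_ mu); case: ifP => [_ /fin_numPlt/andP[]|_ /eqP ->].
Qed.

Lemma finite_on_mem lo hi f mu : finite_on lo hi f -> f mu != -oo -> (lo <= mu <= hi)%R.
Proof. by move/(_ mu); case: ifP => // _ /eqP ->. Qed.

Lemma pl_interp_finite_on lo hi f : pl_interp lo hi f -> finite_on lo hi f.
Proof.
move=> [xs [ys [[_ xs_gt0 xs_sorted xs0 xsN] [f_out f_nodes f_segs]]]] mu.
case: ifPn => [|/negP/f_out ->//]; rewrite -xs0 -xsN => mu_in.
by case: (sorted_interval_cover xs_sorted xs_gt0 mu_in) => -[k Hk];
  [move=> ->; rewrite f_nodes | move/(f_segs k mu Hk) ->].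
Qed.

Lemma leaf_epf_finite_on r1 r2 : finite_on r2 r2 (leaf_epf r1 r2).
Proof. by move=> mu; rewrite /leaf_epf -eq_le eq_sym; case: eqP. Qed.

End FiniteOn.

Section Concavity.
Variable R : realType.
Local Open Scope ereal_scope.

Lemma concave_e_line (r lam m : R) : concave_e (fun x => (r + lam * (x - m))%:E).
Proof.
move=> x y t _; rewrite -!EFinM -EFinD lee_fin.
by rewrite le_eqVlt; apply/orP; left; apply/eqP; ring.
Qed.

(* The sign of [sg] selects the side of [m] that is cut off. *)
Lemma concave_e_cut (h : R -> \bar R) (o : \bar R) (sg m : R) :
  concave_e h -> o <= h m -> sg != 0%R ->
  concave_e (fun x => if (sg * (x - m) < 0)%R then -oo else if x == m then o else h x).
Proof.
move=> h_concave o_le sg_neq0 x y t /andP[t_ge0 t_le1] /=.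
have [->|t_neq0] := eqVneq t 0%R.
  by rewrite mul0e add0e subr0 mul1e mul0r add0r mul1r.
have [->|t_neq1] := eqVneq t 1%R.
  by rewrite mul1e subrr mul0e adde0 mul0r addr0 mul1r.
have t_gt0 : (0 < t)%R by rewrite lt_def t_neq0.
have t'_gt0 : (0 < 1 - t)%R by rewrite subr_gt0 lt_def eq_sym t_neq1.
have [x_cut|x_in] := ltP (sg * (x - m))%R 0%R.
  by rewrite gt0_muleNy ?lte_fin // addNye leNye.
have [y_cut|y_in] := ltP (sg * (y - m))%R 0%R.
  by rewrite (gt0_muleNy (x := (1 - t)%:E)) ?lte_fin // addeNy leNye.
have z_sg : (sg * (t * x + (1 - t) * y - m) =
             t * (sg * (x - m)) + (1 - t) * (sg * (y - m)))%R by ring.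
have tx_ge0 : (0 <= t * (sg * (x - m)))%R by rewrite mulr_ge0 // ltW.
have ty_ge0 : (0 <= (1 - t) * (sg * (y - m)))%R by rewrite mulr_ge0 // ltW.
rewrite (ltNge _ 0%R) z_sg addr_ge0 //=.
case: (eqVneq (t * x + (1 - t) * y)%R m) => [z_eq_m|_].
  have /eqP : (sg * (t * x + (1 - t) * y - m) = 0)%R by rewrite z_eq_m subrr mulr0.
  rewrite z_sg paddr_eq0 // !mulf_eq0 (gt_eqF t_gt0) (gt_eqF t'_gt0) (negbTE sg_neq0).
  rewrite /= !subr_eq0 => /andP[/eqP-> /eqP->]; rewrite eqxx.
  by rewrite -ge0_muleDl ?lee_fin ?(ltW t'_gt0) // -EFinD addrC subrK mul1e.
have cut_le v : (if v == m then o else h v) <= h v by case: eqVneq => [->|].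
apply: le_trans (h_concave x y t _); last by rewrite t_ge0 t_le1.
by apply: leeD; apply: lee_wpmul2l; rewrite ?lee_fin ?(ltW t'_gt0) ?cut_le.
Qed.

End Concavity.

Section ConcaveEnvelope.
Variables (R : realType) (n : nat) (G : nat -> R -> \bar R).
Local Open Scope ereal_scope.

Let gs := [seq G i | i <- iota 0 n].

Definition mix_feasible (mu : R) i j (t a b : R) : Prop :=
  [/\ (i < n)%N, (j < n)%N, (0 <= t <= 1)%R & (t * a + (1 - t) * b = mu)%R].

Definition mix_value i j (t a b : R) : \bar R := t%:E * G i a + (1 - t)%:E * G j b.

Definition majorant (h : R -> \bar R) : Prop :=
  forall x, \big[maxe/-oo]_(g <- gs) g x <= h x.

Lemma majorantP h : majorant h <-> forall i x, (i < n)%N -> G i x <= h x.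
Proof.
split=> h_maj => [i x Hi|x].
  by apply: le_trans (h_maj x); rewrite big_map le_bigmax_seq // mem_iota.
rewrite big_map big_seq; apply: bigmax_le => [|i]; first exact: leNye.
by rewrite mem_iota => /andP[_]; exact: h_maj.
Qed.

Lemma mix_value_le_concave h mu i j t a b : concave_e h -> majorant h ->
  mix_feasible mu i j t a b -> mix_value i j t a b <= h mu.
Proof.
move=> h_concave /majorantP h_maj [Hi Hj /andP[t_ge0 t_le1] <-].
 apply: le_trans (h_concave a b t _); last by rewrite t_ge0 t_le1.
by apply: leeD; apply: lee_wpmul2l; rewrite ?lee_fin ?subr_ge0 ?h_maj.
Qed.

Lemma mix_value_le_meet_op mu i j t a b :
  mix_feasible mu i j t a b -> mix_value i j t a b <= meet_op gs mu.
Proof.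
move=> feas; apply/ereal_infP => _ [h [h_concave _ h_maj] <-].
exact: mix_value_le_concave feas.
Qed.

Lemma meet_op_le h mu : concave_e h -> (forall x, h x < +oo) -> majorant h ->
  meet_op gs mu <= h mu.
Proof. by move=> *; apply: ereal_inf_lbound; exists h. Qed.

Lemma meet_op_majorant mu : meet_op gs mu != +oo ->
  exists h, [/\ concave_e h, (forall x, h x < +oo) & majorant h].
Proof.
move/negP=> meet_fin; apply: contrapT => no_majorant; apply: meet_fin.
rewrite /meet_op (_ : image _ _ = set0) ?ereal_inf0 //.
by apply/seteqP; split=> // v [h Ph _]; apply: no_majorant; exists h.
Qed.

Section UpperBound.
Variables (mu : R) (o : \bar R).
Hypothesis G_lty : forall i x, (i < n)%N -> G i x < +oo.
Hypothesis mix_value_le : forall i j t a b,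
  mix_feasible mu i j t a b -> mix_value i j t a b <= o.

Lemma G_le_mix_ub i : (i < n)%N -> G i mu <= o.
Proof.
move=> Hi; have := @mix_value_le i i 1%R mu mu.
rewrite /mix_value subrr mul1e mul0e adde0; apply.
by split; rewrite ?ler01 ?lexx ?subrr ?mul1r ?mul0r ?addr0.
Qed.

(* Cut a finite concave majorant down to [-oo] on the side where all [G i]
   vanish, and to [min o (h mu)] at [mu]. *)
Lemma meet_op_le_one_sided sg : sg != 0%R -> meet_op gs mu != +oo ->
  (forall i x, (i < n)%N -> (sg * (x - mu) < 0)%R -> G i x = -oo) ->
  meet_op gs mu <= o.
Proof.
move=> sg_neq0 /meet_op_majorant[h [h_concave h_lty /majorantP G_le_h]] G_cut.
pose c := mine o (h mu).
pose h' x := if (sg * (x - mu) < 0)%R then -oo else if x == mu then c else h x.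
apply: (@le_trans _ _ (h' mu)); last by rewrite /h' subrr mulr0 ltxx eqxx ge_min lexx.
apply: meet_op_le => [|x|].
- by apply: concave_e_cut; rewrite // ge_min lexx orbT.
- by rewrite /h'; case: ifP => // _; case: ifP => _; rewrite ?gt_min h_lty ?orbT.
- apply/majorantP => i x Hi; rewrite /h'; case: ifPn => [/(G_cut i x Hi)->//|_].
  case: eqVneq => [->|_]; last exact: G_le_h.
  by rewrite le_min G_le_mix_ub ?G_le_h.
Qed.

Lemma chord_le_mix_ub i j x' x y' y : (i < n)%N -> (j < n)%N ->
  (x' < mu)%R -> (mu < x)%R -> G i x' = y'%:E -> G j x = y%:E ->
  (((x - mu) * y' + (mu - x') * y) / (x - x'))%:E <= o.
Proof.
move=> Hi Hj Hx' Hx Gi Gj.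
have x'_lt_x := lt_trans Hx' Hx.
have d_gt0 : (0 < x - x')%R by rewrite subr_gt0.
have := @mix_value_le i j ((x - mu) / (x - x'))%R x' x.
rewrite /mix_value Gi Gj -!EFinM -EFinD.
have -> : ((x - mu) / (x - x') * y' + (1 - (x - mu) / (x - x')) * y =
           ((x - mu) * y' + (mu - x') * y) / (x - x'))%R by field; rewrite gt_eqF.
apply; split=> //; last by field; rewrite gt_eqF.
rewrite divr_ge0 ?subr_ge0 ?(ltW Hx) ?(ltW x'_lt_x) //=.
by rewrite ler_pdivrMr // mul1r lerD2l lerN2 ltW.
Qed.

Lemma fine_G k x : (k < n)%N -> G k x != -oo -> (fine (G k x))%:E = G k x.
Proof. by move=> Hk Gk; rewrite fineK // fin_numE Gk lt_eqF ?G_lty. Qed.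

Lemma right_slope_le_left_slope r k x y k' x' y' : o = r%:E ->
  (k < n)%N -> (k' < n)%N -> (x' < mu)%R -> (mu < x)%R ->
  G k' x' = y'%:E -> G k x = y%:E ->
  ((y - r) / (x - mu) <= (r - y') / (mu - x'))%R.
Proof.
move=> o_r Hk Hk' Hx' Hx Gk' Gk.
have := chord_le_mix_ub Hk' Hk Hx' Hx Gk' Gk.
rewrite o_r lee_fin ler_pdivrMr ?subr_gt0 ?(lt_trans Hx') // => chord.
by rewrite ler_pdivrMr ?subr_gt0 // mulrAC ler_pdivlMr ?subr_gt0 //; lra.
Qed.

(* The supporting line at [mu] whose slope is the supremum of the right
   slopes; every left slope bounds that supremum. *)
Lemma meet_op_le_two_sided i1 x1 i2 x2 :
  (i1 < n)%N -> (x1 < mu)%R -> G i1 x1 != -oo ->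
  (i2 < n)%N -> (mu < x2)%R -> G i2 x2 != -oo ->
  meet_op gs mu <= o.
Proof.
move=> Hi1 Hx1 G1 Hi2 Hx2 G2.
have [->|o_neq_pinfty] := eqVneq o +oo; first exact: leey.
have [r o_r] : exists r, o = r%:E.
  exists (fine o); rewrite fineK // fin_numE o_neq_pinfty andbT.
  have := chord_le_mix_ub Hi1 Hi2 Hx1 Hx2 (esym (fine_G Hi1 G1)) (esym (fine_G Hi2 G2)).
  by apply: contraTneq => ->; rewrite leeNy_eq.
pose S : set R := fun s => exists k x, [/\ (k < n)%N, (mu < x)%R, G k x != -oo &
                                     s = (fine (G k x) - r) / (x - mu)]%R.
have S_ub k x : (k < n)%N -> (x < mu)%R -> G k x != -oo ->
    ubound S ((r - fine (G k x)) / (mu - x))%R.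
  move=> Hk Hx Gk _ [k' [x' [Hk' Hx' Gk' ->]]].
  exact: right_slope_le_left_slope o_r Hk' Hk Hx Hx' (esym (fine_G Hk Gk)) (esym (fine_G Hk' Gk')).
have S_neq0 : (S !=set0)%classic by eexists; exists i2, x2.
have S_sup : has_sup S by split=> //; eexists; exact: S_ub Hi1 Hx1 G1.
pose line x := (r + sup S * (x - mu))%:E.
apply: (@le_trans _ _ (line mu)); last by rewrite /line subrr mulr0 addr0 o_r.
apply: meet_op_le => [|x|]; [exact: concave_e_line | exact: ltry |].
apply/majorantP => k x Hk.
have [->|Gk] := eqVneq (G k x) -oo; first exact: leNye.
rewrite -(fine_G Hk Gk) lee_fin.
case: (ltgtP x mu) => [Hx|Hx|x_mu].
- have := ge_sup S_neq0 (S_ub k x Hk Hx Gk).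
  by rewrite ler_pdivlMr ?subr_gt0 //; lra.
- have : ((fine (G k x) - r) / (x - mu) <= sup S)%R.
    by apply: sup_upper_bound => //; exists k, x.
  by rewrite ler_pdivrMr ?subr_gt0 //; lra.
- subst x; have := G_le_mix_ub Hk; rewrite -(fine_G Hk Gk) o_r lee_fin.
  by rewrite subrr mulr0 addr0.
Qed.

Lemma meet_op_le_mix_ub : meet_op gs mu != +oo -> meet_op gs mu <= o.
Proof.
move=> meet_fin.
have [[i1 [x1 [Hi1 Hx1 G1]]]|no_left] :=
  pselect (exists i x, [/\ (i < n)%N, (x < mu)%R & G i x != -oo]); last first.
  apply: (@meet_op_le_one_sided 1%R) => // i x Hi.
  rewrite mul1r subr_lt0 => Hx; case: (eqVneq (G i x) -oo) => // Gi.
  by exfalso; apply: no_left; exists i, x.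
have [[i2 [x2 [Hi2 Hx2 G2]]]|no_right] :=
  pselect (exists i x, [/\ (i < n)%N, (mu < x)%R & G i x != -oo]); last first.
  apply: (@meet_op_le_one_sided (-1)%R) => // i x Hi.
  rewrite mulN1r oppr_lt0 subr_gt0 => Hx; case: (eqVneq (G i x) -oo) => // Gi.
  by exfalso; apply: no_right; exists i, x.
exact: (meet_op_le_two_sided Hi1 Hx1 G1 Hi2 Hx2 G2).
Qed.

End UpperBound.

Lemma meet_op_eq_mix_max mu i0 j0 t0 a0 b0 :
  (forall i x, (i < n)%N -> G i x < +oo) -> meet_op gs mu != +oo ->
  mix_feasible mu i0 j0 t0 a0 b0 ->
  (forall i j t a b, mix_feasible mu i j t a b ->
     mix_value i j t a b <= mix_value i0 j0 t0 a0 b0) ->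
  meet_op gs mu = mix_value i0 j0 t0 a0 b0.
Proof.
move=> G_lty meet_fin feas0 max0; apply/eqP.
by rewrite eq_le mix_value_le_meet_op // andbT meet_op_le_mix_ub.
Qed.

End ConcaveEnvelope.

Section Trees.
Variable R : realType.

Lemma subtree_rcons (g : tree R) p b cs i : subtree g p = Some (Node b cs) ->
  (i < size cs)%N -> subtree g (rcons p i) = Some (nth (Leaf 0 0) cs i).
Proof.
elim: p g => [|j p IH] g /=.
  by case=> -> Hi /=; rewrite Hi; congr Some; exact: set_nth_default.
by case: g => // b' cs'; case: ifP => // _; exact: IH.
Qed.

Lemma leq_nth_foldr_maxn (s : seq nat) i : (i < size s)%N -> (nth 0 s i <= foldr maxn 0 s)%N.
Proof.
elim: s i => //= a s IH [|i] Hi; first exact: leq_maxl.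
exact: leq_trans (IH i Hi) (leq_maxr _ _).
Qed.

Lemma depth_nth_lt b (cs : seq (tree R)) i d : (i < size cs)%N ->
  (depth (nth d cs i) < depth (Node b cs))%N.
Proof.
by move=> Hi; rewrite ltnS -(nth_map d 0%N) ?leq_nth_foldr_maxn ?size_map.
Qed.

Lemma depth_subtree (g : tree R) p s : subtree g p = Some s -> (depth s <= depth g)%N.
Proof.
elim: p g => [|j p IH] g /=; first by case=> ->.
case: g => // b cs; case: ifP => // Hj /IH Hs.
exact/ltnW/(leq_trans Hs)/depth_nth_lt.
Qed.

End Trees.

Section Game.
Variables (R : realType) (g : tree R) (U : seq nat -> R -> \bar R)
  (Q : seq nat -> R -> R) (eps : R).
Hypothesis U_learned : learned_epfs g U.
Hypothesis U_near_target :
  forall p s, subtree g p = Some s -> (Linf (U p) (target U p s) <= eps%:E)%E.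
Hypothesis Q_induced : induced_payoff g U Q.
Local Open Scope ereal_scope.

Lemma U_finite_on p s : subtree g p = Some s -> finite_on (Vlo s) (Vhi s) (U p).
Proof.
case: U_learned => U_leaf U_node; case: s => [r1 r2|b cs] Hs.
  by rewrite (U_leaf _ _ _ Hs); exact: leaf_epf_finite_on.
exact/pl_interp_finite_on/(U_node _ _ _ Hs).
Qed.

Lemma ediff_target_le p s mu : subtree g p = Some s ->
  ediff (U p mu) (target U p s mu) <= eps%:E.
Proof.
by move=> Hs; apply: le_trans (U_near_target Hs); apply: ereal_sup_ubound; exists mu.
Qed.

Lemma eps_ge0 : (0 <= eps)%R.
Proof.
have := @ediff_target_le [::] g 0%R erefl; rewrite /ediff; case: ifP => _.
  by rewrite lee_fin.
by rewrite -lee_fin; apply: le_trans; exact: abse_ge0.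
Qed.

Lemma target_node_eq p b cs mu2 i j t mu' mu'' :
  subtree g p = Some (Node b cs) -> (Vlo (Node b cs) <= mu2 <= Vhi (Node b cs))%R ->
  lookahead_feasible cs mu2 i j t mu' mu'' ->
  (forall i' j' t' nu' nu'', lookahead_feasible cs mu2 i' j' t' nu' nu'' ->
     lookahead_obj U p b cs i' j' t' nu' nu'' <= lookahead_obj U p b cs i j t mu' mu'') ->
  target U p (Node b cs) mu2 = lookahead_obj U p b cs i j t mu' mu''.
Proof.
move=> Hs Hmu feas maximal.
have := U_finite_on Hs mu2; rewrite Hmu => /fineK U_fin.
apply: meet_op_eq_mix_max feas maximal => [k x Hk|].
  rewrite /trunc; case: ifP => _ //.
  exact: finite_on_lty (U_finite_on (subtree_rcons Hs Hk)).
apply: contraTneq (ediff_target_le mu2 Hs) => /= ->.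
by rewrite -U_fin /ediff.
Qed.

Lemma weighted_child_error p b cs k w m d :
  subtree g p = Some (Node b cs) -> (k < size cs)%N -> (0 <= w)%R ->
  (forall m, (Vlo (nth (Leaf 0 0) cs k) <= m <= Vhi (nth (Leaf 0 0) cs k))%R ->
     `|(Q (rcons p k) m)%:E - U (rcons p k) m| <= d%:E) ->
  w%:E * trunc (U (rcons p k)) (beta b cs k) m != -oo ->
  exists a, w%:E * trunc (U (rcons p k)) (beta b cs k) m = (w * a)%:E /\
            (`|w * Q (rcons p k) m - w * a| <= w * d)%R.
Proof.
move=> Hs Hk w_ge0 child_err term_fin.
have [->|w_neq0] := eqVneq w 0%R.
  by exists 0%R; rewrite mul0e !mul0r subrr normr0.
have trunc_fin : trunc (U (rcons p k)) (beta b cs k) m != -oo.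
  by apply: contraNneq term_fin => ->; rewrite gt0_muleNy // lte_fin lt_def w_neq0.
have trunc_eq : trunc (U (rcons p k)) (beta b cs k) m = U (rcons p k) m.
  by move: trunc_fin; rewrite /trunc; case: ifP.
rewrite trunc_eq in trunc_fin *.
have child_fin := U_finite_on (subtree_rcons Hs Hk).
have m_in := finite_on_mem child_fin trunc_fin.
have := child_fin m; rewrite m_in => /fineK Uk.
exists (fine (U (rcons p k) m)); rewrite -{1}Uk -EFinM; split=> //.
have := child_err m m_in; rewrite -Uk -EFinB abse_EFin lee_fin => err.
by rewrite -mulrBr normrM ger0_norm // ler_wpM2l.
Qed.

Lemma node_error p b cs d mu2 : subtree g p = Some (Node b cs) ->
  (Vlo (Node b cs) <= mu2 <= Vhi (Node b cs))%R ->
  (forall i, (i < size cs)%N -> forall m,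
     (Vlo (nth (Leaf 0 0) cs i) <= m <= Vhi (nth (Leaf 0 0) cs i))%R ->
     `|(Q (rcons p i) m)%:E - U (rcons p i) m| <= d%:E) ->
  `|(Q p mu2)%:E - U p mu2| <= (d + eps)%:E.
Proof.
move=> Hs Hmu child_err.
have [i [j [t [mu' [mu'' [feas maximal ->]]]]]] := Q_induced.2 p b cs mu2 Hs Hmu.
have := ediff_target_le mu2 Hs; rewrite (target_node_eq Hs Hmu feas maximal).
have := U_finite_on Hs mu2; rewrite Hmu => /fineK <-; set u := fine (U p mu2).
case: feas => Hi Hj /andP[t_ge0 t_le1] _; rewrite /lookahead_obj => err_target.
have [|a [Ea err_i]] := @weighted_child_error _ _ _ _ _ mu' _ Hs Hi t_ge0 (child_err i Hi).
  by apply: contraTneq err_target => ->; rewrite addNye.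
have t'_ge0 : (0 <= 1 - t)%R by rewrite subr_ge0.
have [|c [Ec err_j]] := @weighted_child_error _ _ _ _ _ mu'' _ Hs Hj t'_ge0 (child_err j Hj).
  by apply: contraTneq err_target => ->; rewrite addeNy.
move: err_target; rewrite Ea Ec -EFinD /ediff /= !lee_fin.
move: err_i err_j; rewrite !ler_norml => /andP[? ?] /andP[? ?] /andP[? ?].
by apply/andP; split; lra.
Qed.

Lemma error_le_depth p s : subtree g p = Some s ->
  forall mu2, (Vlo s <= mu2 <= Vhi s)%R ->
  `|(Q p mu2)%:E - U p mu2| <= (eps * (depth s)%:R)%:E.
Proof.
move=> Hs; have [k] := ubnP (depth s).
elim: k p s Hs => // k IH p [r1 r2|b cs] Hs depth_lt mu2 Hmu.
  move: Hmu; rewrite /= -eq_le eq_sym => /eqP ->.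
  rewrite (Q_induced.1 _ _ _ Hs) (U_learned.1 _ _ _ Hs) /leaf_epf eqxx.
  by rewrite -EFinB subrr abse0 mulr0.
rewrite [depth _]/= mulrSr mulrDr mulr1.
apply: (node_error Hs Hmu) => i Hi m Hm.
apply: le_trans (IH _ _ (subtree_rcons Hs Hi) (leq_trans (depth_nth_lt b _ Hi) depth_lt) m Hm) _.
by rewrite lee_fin ler_wpM2l ?eps_ge0 // ler_nat -ltnS depth_nth_lt.
Qed.

End Game.

Theorem theorem6 (R : realType) (g : tree R) (U : seq nat -> R -> \bar R)
  (Q : seq nat -> R -> R) (eps : R) :
  wf_tree g ->
  learned_epfs g U ->
  (forall p s, subtree g p = Some s -> (Linf (U p) (target U p s) <= eps%:E)%E) ->
  induced_payoff g U Q ->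
  forall p s, subtree g p = Some s ->
  forall mu2 : R, Vlo s <= mu2 <= Vhi s ->
    (`|(Q p mu2)%:E - U p mu2| <= (eps * (depth g)%:R)%:E)%E.
Proof.
move=> _ U_learned U_near_target Q_induced p s Hs mu2 Hmu.
apply: le_trans (error_le_depth U_learned U_near_target Q_induced Hs Hmu) _.
rewrite lee_fin ler_wpM2l ?(eps_ge0 U_near_target) // ler_nat.
exact: depth_subtree Hs.
Qed.
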